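(* Let $q\ge 3$ be a prime power, $n\ge1$, and let $C\subseteq\mathbb{F}_q^n$ be a non-zero linear code of dimension $1\le t\le n$. For any integer $1\le r\le t$, $$d_r(C)=\min\{\dim_{\mathbb{F}_q}(A): A\in\mathcal{A}^H_q(n),\ \dim_{\mathbb{F}_q}(A\cap C)\ge r\}.$$
   Context: For $v\in\mathbb{F}_q^n$, $\mathrm{wt}(v):=|\{i: v_i\ne0\}|$; for a linear code $C$, $\mathrm{maxwt}(C):=\max\{\mathrm{wt}(c):c\in C\}$. One always has $\dim_{\mathbb{F}_q}(C)\le\mathrm{maxwt}(C)$; $\mathcal{A}^H_q(n)$ is the set of linear codes in $\mathbb{F}_q^n$ attaining equality (optimal linear anticodes). The support of a subspace $D$ is $\chi(D):=\{i\in\{1,\dots,n\}:\exists d\in D,\ d_i\ne0\}$, and the $r$-th generalized Hamming weight is $d_r(C):=\min\{|\chi(D)|: D\subseteq C,\ \dim_{\mathbb{F}_q}(D)=r\}$. *)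

(* Linear codes in F_q^n are represented, as in mxalgebra,
   by the row space of a matrix C : 'M[F]_n (square, so that all subspaces of
   'rV[F]_n live in one finite type); dim = \rank, subspace = (_ <= _)%MS,
   intersection = (_ :&: _)%MS. *)
From HB Require Import structures.
From mathcomp Require Import all_boot all_order all_algebra all_field.
Set Implicit Arguments. Unset Strict Implicit. Unset Printing Implicit Defensive.
Import GRing.Theory.
Local Open Scope ring_scope.

Section Codes.
Variables (F : finFieldType) (n : nat).

Definition wt (v : 'rV[F]_n) : nat := #|[set i : 'I_n | v 0 i != 0]|.

Definition maxwt (C : 'M[F]_n) : nat :=
  \max_(v : 'rV[F]_n | (v <= C)%MS) wt v.

Definition anticode (C : 'M[F]_n) : bool := \rank C == maxwt C.

Definition supp (D : 'M[F]_n) : {set 'I_n} :=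
  [set i : 'I_n | [exists d : 'rV[F]_n, (d <= D)%MS && (d 0 i != 0)]].

(* r-th generalized Hamming weight: min of |chi(D)| over r-dim subspaces D of C.
   (The default value n of the min is harmless: every candidate is <= n.) *)
Definition ghw (C : 'M[F]_n) (r : nat) : nat :=
  \big[minn/n]_(D : 'M[F]_n | (D <= C)%MS && (\rank D == r)) #|supp D|.

End Codes.

(* Every coordinate subspace F^S is an optimal anticode of dimension |S|, and
   every subspace D of C lies in F^(supp D); this bounds the minimum by d_r(C).
   Conversely, when q >= 3 an optimal anticode A has |supp A| <= dim A:
   otherwise take an information set I of A and a coordinate j of supp A
   outside I; a codeword of A is determined by its entries on I, and these can
   be chosen all nonzero while keeping coordinate j nonzero (a single linear
   condition, avoidable since q >= 3), giving a codeword of weight > dim A.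
   Hence an r-dimensional subspace of A :&: C has support at most dim A. *)

From mathcomp Require Import all_boot all_order all_algebra.
Set Implicit Arguments. Unset Strict Implicit. Unset Printing Implicit Defensive.
Import Order.TTheory GRing.Theory.
Local Open Scope ring_scope.

Section BigMinNat.
Variables (I : finType) (P : pred I) (G : I -> nat) (d : nat).

Lemma bigminn_le_id : (\big[minn/d]_(i | P i) G i <= d)%N.
Proof. by have := @bigmin_le_id _ nat _ (index_enum I) d P G; rewrite minEnat. Qed.

Lemma bigminn_le_cond i : P i -> (\big[minn/d]_(j | P j) G j <= G i)%N.
Proof. by move=> Pi; have := @bigmin_le_cond _ nat I d i P G Pi; rewrite minEnat. Qed.

Lemma leq_bigminn m :
  (m <= d)%N -> (forall i, P i -> m <= G i)%N -> (m <= \big[minn/d]_(i | P i) G i)%N.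
Proof.
by move=> md mG; have := @le_bigmin _ nat I (index_enum I) G d m P md mG; rewrite minEnat.
Qed.

End BigMinNat.

Lemma information_set (F : fieldType) (p n : nat) (A : 'M[F]_(p, n)) :
  exists2 f : 'I_(\rank A) -> 'I_n, injective f &
  exists2 K : 'M[F]_(\rank A, n), (K :=: A)%MS & colsub f K = 1%:M.
Proof.
have fullB : row_full (row_base A)^T by rewrite /row_full mxrank_tr eq_row_base.
pose f := fullrankfun fullB; pose M := colsub f (row_base A).
have unitM : M \in unitmx.
  have := fullrowsub_unit fullB; rewrite -unitmx_tr.
  by congr (_ \in unitmx); apply/matrixP => i j; rewrite !mxE.
exists f; first exact: fullrankfun_inj.
exists (invmx M *m row_base A); last by rewrite -mulmx_colsub mulVmx.
apply: eqmx_trans (eq_row_base A).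
by apply: eqmxMfull; rewrite row_full_unit unitmx_inv.
Qed.

Lemma nowhere_zero_row_notin_ker (F : finFieldType) (m : nat) (lam : 'cV[F]_m) :
  (2 < #|F|)%N -> lam != 0 ->
  exists2 u : 'rV[F]_m, forall i, u 0 i != 0 & (u *m lam) 0 0 != 0.
Proof.
move=> F3 lam0.
have [i0 lam_i0] : exists i0, lam i0 0 != 0.
  apply/existsP; apply: contraNT lam0 => /existsPn lam_0; apply/eqP/matrixP => i j.
  by rewrite [j]ord1 mxE; apply/eqP; have := lam_0 i; rewrite negbK.
set s := \sum_(i | i != i0) lam i 0.
(* c is neither 0 nor the unique value killing (u *m lam) 0 0 *)
have /subsetPn [c _] : ~~ ([set: F] \subset [set 0; - s / lam i0 0]).
  apply: contraTN F3 => /subset_leq_card; rewrite cardsT cards2 -leqNgt => le_F.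
  by apply: leq_trans le_F _; rewrite ltnS leq_b1.
rewrite !inE negb_or => /andP [c0 c_s].
exists (\row_i (if i == i0 then c else 1)) => [i|].
  by rewrite mxE; case: ifP; rewrite ?oner_eq0.
rewrite mxE (bigD1 i0) //= mxE eqxx; apply: contra c_s => /eqP lam_u0.
rewrite -[c](mulfK lam_i0) eq_sym; apply/eqP; congr (_ / _); apply/eqP.
rewrite eq_sym -addr_eq0 -[X in _ == X]lam_u0; apply/eqP; congr (_ + _).
by apply: eq_bigr => i /negbTE i_i0; rewrite mxE i_i0 mul1r.
Qed.

Section Anticodes.
Variables (F : finFieldType) (n : nat).
Implicit Types (S : {set 'I_n}) (v : 'rV[F]_n) (A C D : 'M[F]_n).

Lemma subset_supp D A : (D <= A)%MS -> supp D \subset supp A.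
Proof.
move=> DA; apply/subsetP => i; rewrite !inE => /existsP [d /andP [dD di]].
by apply/existsP; exists d; rewrite (submx_trans dD DA) di.
Qed.

Lemma exists_wt_gt_rank A : (2 < #|F|)%N -> (\rank A < #|supp A|)%N ->
  exists2 v, (v <= A)%MS & (\rank A < wt v)%N.
Proof.
move=> F3 lt_rk_supp.
have [f inj_f [K eqKA Kf1]] := information_set A.
have entry_col (x : 'rV[F]_(\rank A)) j : (x *m K) 0 j = (x *m col j K) 0 0.
  by rewrite !mxE; apply: eq_bigr => i _; rewrite mxE.
have entry_f (x : 'rV[F]_(\rank A)) l : (x *m K) 0 (f l) = x 0 l.
  have -> : x 0 l = (x *m colsub f K) 0 l by rewrite Kf1 mulmx1.
  by rewrite mulmx_colsub [RHS]mxE.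
have /subsetPn [j jA jf] : ~~ (supp A \subset codom f).
  apply: contraTN lt_rk_supp => /subset_leq_card.
  by rewrite card_codom // card_ord -leqNgt.
have Kj0 : col j K != 0.
  move: jA; rewrite inE => /existsP [d /andP []].
  rewrite -eqKA => /submxP [w ->]; rewrite entry_col; apply: contraNneq => ->.
  by rewrite mulmx0 mxE.
have [u u_nz uKj] := nowhere_zero_row_notin_ker F3 Kj0.
exists (u *m K); first by rewrite -eqKA submxMl.
apply: (@leq_trans #|j |: [set i in codom f]|).
  by rewrite cardsU1 inE jf cardsE card_codom // card_ord.
apply/subset_leq_card/subsetP => i; rewrite !inE => /predU1P [-> | /codomP [l ->]].
  by rewrite entry_col.
by rewrite entry_f.
Qed.

Lemma anticode_card_supp A : (2 < #|F|)%N -> anticode A -> (#|supp A| <= \rank A)%N.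
Proof.
move=> F3 /eqP rkA; rewrite leqNgt; apply/negP => /(exists_wt_gt_rank F3) [v vA].
by rewrite rkA ltnNge => /negP; apply; exact: leq_bigmax_cond.
Qed.

Definition coord_mx S : 'M[F]_n := diag_mx (\row_i (i \in S)%:R).

Lemma coord_mxP S v : reflect (forall i, v 0 i != 0 -> i \in S) (v <= coord_mx S)%MS.
Proof.
apply: (iffP idP) => [/submxP [x ->] i | vS].
  by rewrite mul_mx_diag !mxE; case: (i \in S); rewrite ?mulr0 ?eqxx.
apply/submxP; exists v; apply/rowP => i; rewrite mul_mx_diag !mxE.
have [iS | iNS] := boolP (i \in S); first by rewrite mulr1.
by rewrite mulr0; apply/eqP; exact: contraNT (vS i) iNS.
Qed.

Lemma rank_coord_mx S : \rank (coord_mx S) = #|S|.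
Proof.
pose P : 'M[F]_(#|S|, n) := rowsub enum_val 1%:M.
have freeP : row_free P.
  apply/row_freeP; exists P^T; rewrite -rowsubE; apply/matrixP => k l.
  by rewrite !mxE (inj_eq enum_val_inj) eq_sym.
rewrite -(eqP freeP); apply: eqmx_rank; apply/andP; split; apply/row_subP => i.
  rewrite row_diag_mx mxE; have [iS | _] := boolP (i \in S); last first.
    by rewrite scale0r sub0mx.
  by rewrite scale1r -row1 -(enum_rankK_in iS iS) -row_rowsub row_sub.
apply/coord_mxP => j; rewrite !mxE.
by have [<- _ | _] := eqVneq (enum_val i) j; [exact: enum_valP | rewrite eqxx].
Qed.

Lemma maxwt_coord_mx S : maxwt (coord_mx S) = #|S|.
Proof.
apply/eqP; rewrite eqn_leq; apply/andP; split.
  apply/bigmax_leqP => v /coord_mxP vS.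
  by apply/subset_leq_card/subsetP => i; rewrite inE => /vS.
pose d : 'rV[F]_n := \row_i (i \in S)%:R.
have dS : (d <= coord_mx S)%MS.
  by apply/coord_mxP => i; rewrite mxE; case: (i \in S); rewrite ?eqxx.
apply: leq_trans (leq_bigmax_cond _ dS); apply/eq_leq/eq_card => i.
by rewrite inE mxE; case: (i \in S); rewrite ?oner_eq0 ?eqxx.
Qed.

Lemma anticode_coord_mx S : anticode (coord_mx S).
Proof. by rewrite /anticode rank_coord_mx maxwt_coord_mx. Qed.

Lemma sub_coord_mx_supp D : (D <= coord_mx (supp D))%MS.
Proof.
apply/row_subP => k; apply/coord_mxP => i ki; rewrite inE.
by apply/existsP; exists (row k D); rewrite row_sub ki.
Qed.

Lemma ghw_le_rank_anticode C A r : (2 < #|F|)%N ->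
  anticode A -> (r <= \rank (A :&: C))%N -> (ghw C r <= \rank A)%N.
Proof.
move=> F3 antiA rAC.
pose D : 'M[F]_n := pid_mx r *m row_base (A :&: C)%MS.
have DAC : (D <= A :&: C)%MS by rewrite (submx_trans (submxMl _ _)) ?eq_row_base.
have rkD : \rank D = r.
  rewrite mxrankMfree ?row_base_free // rank_pid_mx //.
  exact: leq_trans rAC (rank_leq_col _).
apply: (@leq_trans #|supp D|).
  by apply: bigminn_le_cond; rewrite (submx_trans DAC (capmxSr _ _)) rkD eqxx.
apply: leq_trans (anticode_card_supp F3 antiA).
exact/subset_leq_card/subset_supp/(submx_trans DAC (capmxSl _ _)).
Qed.

End Anticodes.

Theorem theorem2p7 (F : finFieldType) (n t r : nat) (C : 'M[F]_n) :
  (3 <= #|F|)%N -> (1 <= n)%N ->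
  \rank C = t -> (1 <= t)%N -> (t <= n)%N ->
  (1 <= r)%N -> (r <= t)%N ->
  ghw C r =
  \big[minn/n]_(A : 'M[F]_n | anticode A && (r <= \rank (A :&: C)%MS)%N) \rank A.
Proof.
move=> F3 _ _ _ _ _ _; apply/eqP; rewrite eqn_leq; apply/andP; split.
  apply: leq_bigminn => [|A /andP [antiA rAC]]; first exact: bigminn_le_id.
  exact: ghw_le_rank_anticode.
apply: leq_bigminn => [|D /andP [DC /eqP rkD]]; first exact: bigminn_le_id.
rewrite -(rank_coord_mx F); apply: bigminn_le_cond.
by rewrite anticode_coord_mx -rkD mxrankS // sub_capmx sub_coord_mx_supp DC.
Qed.
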